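(* Let $\mathcal{S}$ be finite, $\Pi$ irreducible stochastic on $\mathcal{S}$, $\kappa(x,y):=\pi_{xy}-\mathbf{1}_{x=y}$, $\mathcal{K}=\Pi-\mathrm{I}$, $Q=(q(y))$ the invariant distribution, and assume detailed balance $q(y)\kappa(y,z)=q(z)\kappa(z,y)$ for all $y,z$. Let $\Phi:(0,\infty)\to\mathbb{R}$ be convex, continuously differentiable with continuous strictly positive second derivative, $\Phi(1)=0$, $\varphi:=\Phi'$. Let $P\in\mathcal{M}$ with likelihood ratio vector $\boldsymbol{\ell}=P/Q$. Then along any smooth curve $(\widetilde P_t)_{0\le t<\infty}\subset\mathcal{M}$ with $\widetilde P_0=P$ and induced likelihood ratios $\widetilde\ell_t=\widetilde P_t/Q$, $$\Big(2\,\partial_tH^\Phi(\widetilde P_t\,|\,Q)+\big\|\partial_t\widetilde\ell_t\big\|^2_{\mathbb{H}^{-1}_\Theta(\mathcal{S},\boldsymbol{\ell}Q)}\Big)\Big|_{t=0}\ \ge\ -\big\|\varphi(\boldsymbol{\ell})\big\|^2_{\mathbb{H}^1_\Theta(\mathcal{S},\boldsymbol{\ell}Q)} .$$ Equality holds if and only if the curve satisfies the forward equation $\partial_t\widetilde P_t=\mathcal{K}'\widetilde P_t$ (equivalently, $\partial_t\widetilde\ell_t=\mathcal{K}\widetilde\ell_t$, with driver $f_t=-\varphi(\widetilde\ell_t)$ in the continuity equation $\partial_t\widetilde\ell_t+\nabla\cdot(\vartheta_{\widetilde\ell_t}\nabla f_t)=0$).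
   Context: $\mathcal{M}$: probability vectors on $\mathcal{S}$ with strictly positive entries; $\mathcal{K}'$ is the transpose of $\mathcal{K}$. $H^\Phi(P\,|\,Q):=\sum_yq(y)\Phi(p(y)/q(y))$. $\mathcal{Z}:=\{(x,y):\kappa(x,y)>0\}$, $c(x,y):=\frac12\kappa(x,y)q(x)$, $\nabla f(x,y):=f(y)-f(x)$, $(\nabla\cdot F)(x):=\frac12\sum_{y\ne x}\kappa(x,y)[F(x,y)-F(y,x)]$; $\Theta^\Phi(a,b):=\frac{a-b}{\varphi(a)-\varphi(b)}$ for $a\ne b$, $\Theta^\Phi(b,b):=1/\Phi''(b)$; $\vartheta_\ell(x,y):=\Theta^\Phi(\ell(x),\ell(y))$; $\|f\|^2_{\mathbb{H}^1_\Theta(\mathcal{S},\ell Q)}:=\sum_{(x,y)\in\mathcal{Z}}c(x,y)\vartheta_\ell(x,y)(\nabla f(x,y))^2$; $\|f\|_{\mathbb{H}^{-1}_\Theta(\mathcal{S},\ell Q)}:=\sup_{g}\frac{\sum_xq(x)f(x)g(x)}{\|g\|_{\mathbb{H}^1_\Theta(\mathcal{S},\ell Q)}}$. *)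

From HB Require Import structures.
From mathcomp Require Import all_boot all_order all_algebra.
From mathcomp Require Import all_classical all_reals all_analysis.
Set Implicit Arguments. Unset Strict Implicit. Unset Printing Implicit Defensive.
Import Order.TTheory GRing.Theory Num.Theory.
Import numFieldNormedType.Exports.
Local Open Scope classical_set_scope.
Local Open Scope ring_scope.

Section Defs.
Context {R : realType} {S : finType}.

Definition kappa (Pi : S -> S -> R) (x y : S) : R := Pi x y - (x == y)%:R.

Definition stochastic (Pi : S -> S -> R) : Prop :=
  (forall x y, 0 <= Pi x y) /\ (forall x, \sum_y Pi x y = 1).

Definition irreducible (Pi : S -> S -> R) : Prop :=
  forall x y, connect [rel a b | 0 < Pi a b] x y.

Definition invariant_distribution (Pi : S -> S -> R) (q : S -> R) : Prop :=
  [/\ (forall x, 0 <= q x), \sum_x q x = 1 & (forall y, \sum_x q x * Pi x y = q y)].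

Definition detailed_balance (Pi : S -> S -> R) (q : S -> R) : Prop :=
  forall y z, q y * kappa Pi y z = q z * kappa Pi z y.

Definition in_M (p : S -> R) : Prop := (forall x, 0 < p x) /\ \sum_x p x = 1.

Definition Hphi (Phi : R -> R) (q p : S -> R) : R := \sum_y q y * Phi (p y / q y).

Definition Theta (Phi : R -> R) (a b : R) : R :=
  if a != b then (a - b) / (derive1 Phi a - derive1 Phi b) else (derive1 (derive1 Phi) b)^-1.

Definition vartheta (Phi : R -> R) (l : S -> R) (x y : S) : R := Theta Phi (l x) (l y).

Definition cw (Pi : S -> S -> R) (q : S -> R) (x y : S) : R := 2^-1 * kappa Pi x y * q x.

Definition grad (f : S -> R) (x y : S) : R := f y - f x.

Definition H1sq (Pi : S -> S -> R) (q : S -> R) (Phi : R -> R) (l f : S -> R) : R :=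
  \sum_(xy : S * S | 0 < kappa Pi xy.1 xy.2)
     cw Pi q xy.1 xy.2 * vartheta Phi l xy.1 xy.2 * grad f xy.1 xy.2 ^+ 2.

Definition H1norm Pi q Phi (l f : S -> R) : R := Num.sqrt (H1sq Pi q Phi l f).

(* H^{-1}_Theta(S, l Q) norm: sup over g of <f,g>_q / ||g||_{H^1}
   (extended-real valued; MathComp convention x/0 = 0) *)
Definition Hm1norm Pi q Phi (l f : S -> R) : \bar R :=
  ereal_sup [set ((\sum_x q x * f x * g x) / H1norm Pi q Phi l g)%:E
            | g in [set: S -> R]].

Definition rderiv0 (f : R -> R) : R :=
  lim ((fun h : R => h^-1 * (f h - f 0)) @ 0^'+).

(* c is C^infinity on [0, oo) (one-sided derivatives at 0) *)
Definition smooth_nonneg (c : R -> R) : Prop :=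
  exists D : nat -> R -> R,
    (forall t, 0 <= t -> D 0%N t = c t) /\
    (forall n, ((fun h : R => h^-1 * (D n h - D n 0)) @ 0^'+ --> D n.+1 0) /\
               (forall t : R, 0 < t -> is_derive t (1 : R) (D n) (D n.+1 t))).

End Defs.

From HB Require Import structures.
From mathcomp Require Import all_boot all_order all_algebra.
From mathcomp Require Import all_classical all_reals all_analysis.
From mathcomp Require Import ring lra.
Import Order.TTheory GRing.Theory Num.Theory.
Import numFieldNormedType.Exports.
Local Open Scope classical_set_scope.
Local Open Scope ring_scope.

(* Write B for the bilinear form whose quadratic form is the squared
   H^1_Theta(S, l Q) norm.  Since Theta(a, b) (phi(b) - phi(a)) = b - a, the
   gradient of phi(l) weighted by vartheta_l is the gradient of l, and summation
   by parts under detailed balance gives B(phi(l), g) = - <K l, g>_q.  The chain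
   rule gives d/dt H^Phi = <d, phi(l)>_q with d the time derivative of the
   likelihood ratio, which has q-mean zero.  As B(g, g) = 0 only for constant g
   (irreducibility), the H^{-1} norm N of d satisfies 2 <d, g>_q - B(g, g) <= N^2
   for every g, and g = - phi(l) gives the inequality.  Equality means that
   - phi(l) maximises this concave functional, so its first variation
   <d, h>_q + B(phi(l), h) vanishes, i.e. d = K l; conversely, if d = K l then
   Cauchy-Schwarz for B gives N^2 = B(phi(l), phi(l)). *)

Lemma quadratic_ge0_discriminant {R : realFieldType} (A C G : R) : 0 <= G ->
  (forall t, 0 <= A + 2 * t * C + t ^+ 2 * G) -> C ^+ 2 <= A * G.
Proof.
move=> G_ge0 quad_ge0; have [G_gt0|G_le0] := ltP 0 G.
  have := quad_ge0 (- C / G); set t := - C / G => quad_t.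
  have tG : t * G = - C by rewrite /t mulrAC -mulrA mulfV ?mulr1 // gt_eqF.
  nra.
have G0 : G = 0 by apply/eqP; rewrite eq_le G_le0 G_ge0.
rewrite G0 in quad_ge0 *; rewrite mulr0.
have [->|C_neq0] := eqVneq C 0; first by rewrite expr0n.
have := quad_ge0 (- (A + 1) / (2 * C)); set t := - (A + 1) / (2 * C).
have -> : 2 * t * C = - (A + 1) by rewrite /t; field.
rewrite mulr0; lra.
Qed.

Section RightDerivative.
Context {R : realType}.
Implicit Types (f F : R -> R) (a x k : R).

Definition has_rderiv0 f a := (fun h : R => h^-1 * (f h - f 0)) @ 0^'+ --> a.

Lemma rderiv0E {f a} : has_rderiv0 f a -> rderiv0 f = a.
Proof. exact: cvg_lim. Qed.

Lemma has_rderiv0_eq f g a :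
  (forall t, 0 <= t -> f t = g t) -> has_rderiv0 g a -> has_rderiv0 f a.
Proof.
move=> fg; apply: cvg_trans; apply: near_eq_cvg.
by apply: filterS (nbhs_right_gt 0) => h /= h0; rewrite !fg // ltW.
Qed.

Lemma smooth_nonneg_rderiv0 f : smooth_nonneg f -> has_rderiv0 f (rderiv0 f).
Proof.
case=> D [D0 dD]; have fD : has_rderiv0 f (D 1%N 0).
  by apply: (has_rderiv0_eq _ (D 0%N)) => [t t0|]; [rewrite D0 | exact: (dD 0%N).1].
by rewrite (rderiv0E fD).
Qed.

Lemma has_rderiv0_sum (I : Type) (r : seq I) (F : I -> R -> R) (a : I -> R) :
  (forall i, has_rderiv0 (F i) (a i)) ->
  has_rderiv0 (fun t => \sum_(i <- r) F i t) (\sum_(i <- r) a i).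
Proof.
move=> Fa; rewrite /has_rderiv0.
under eq_cvg do rewrite -sumrB mulr_sumr.
by apply: (@cvg_big _ _ +%R 0 xpredT add_continuous) => // i _; exact: Fa.
Qed.

Lemma has_rderiv0_mull c f a :
  has_rderiv0 f a -> has_rderiv0 (fun t => c * f t) (c * a).
Proof.
by move=> fa; rewrite /has_rderiv0; under eq_cvg do rewrite -mulrBr mulrCA; exact: cvgMl_tmp.
Qed.

Lemma has_rderiv0_cvg f a : has_rderiv0 f a -> (fun h => f h - f 0) @ 0^'+ --> 0.
Proof.
move=> fa; have : (fun h => h * (h^-1 * (f h - f 0))) @ 0^'+ --> 0 * a.
  by apply: cvgM => //; exact: cvg_within.
rewrite mul0r; apply: cvg_trans; apply: near_eq_cvg.
by apply: filterS (nbhs_right_gt 0) => h /= h0; rewrite mulrA mulfV ?mul1r // gt_eqF.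
Qed.

(* Caratheodory's form of the derivative, which makes the chain rule below a
   product of limits even where f h = f 0. *)
Definition slope F x k := if k == 0 then derive1 F x else k^-1 * (F (k + x) - F x).

Lemma slope_continuous F x : derivable F x 1 -> {for 0, continuous (slope F x)}.
Proof.
move=> dF; apply/continuous_withinNx; rewrite {2}/slope eqxx.
have -> : derive1 F x = lim ((fun h => h^-1 * (F (h + x) - F x)) @ 0^') by [].
have qE : (fun h : R => h^-1 *: ((F \o shift x) (h *: 1) - F x)) =
          (fun h => h^-1 * (F (h + x) - F x)).
  by apply: funext => h /=; rewrite -[h%:A]/(h * 1) mulr1.
move: dF; rewrite /derivable qE; apply: cvg_trans; apply: near_eq_cvg.
by near=> k; rewrite /slope ifN //; near: k; exact: nbhs_dnbhs_neq.
Unshelve. all: by end_near.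
Qed.

Lemma has_rderiv0_comp F f a : derivable F (f 0) 1 -> has_rderiv0 f a ->
  has_rderiv0 (fun t => F (f t)) (derive1 F (f 0) * a).
Proof.
move=> dF fa; set u := f 0.
have quotE h : h^-1 * (F (f h) - F u) = h^-1 * (f h - u) * slope F u (f h - u).
  rewrite /slope; have [/eqP|ne] := eqVneq (f h - u) 0.
    by rewrite subr_eq0 => /eqP ->; rewrite !subrr mulr0 mul0r.
  by rewrite subrK -mulrA mulVKf.
rewrite /has_rderiv0; under eq_cvg do rewrite quotE.
rewrite mulrC; apply: cvgM => //.
have -> : derive1 F u = slope F u 0 by rewrite /slope eqxx.
exact: (cvg_comp _ _ (has_rderiv0_cvg _ _ fa) (slope_continuous _ _ dF)).
Qed.

End RightDerivative.

Lemma derive1_gt0_incr {R : realType} (F : R -> R) :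
  (forall x, 0 < x -> derivable F x 1) -> (forall x, 0 < x -> 0 < derive1 F x) ->
  forall a b, 0 < a -> a < b -> F a < F b.
Proof.
move=> dF F'_gt0 a b a0 ab; apply: (@gtr0_derive1_incr _ _ a b) => //.
- by move=> x; rewrite in_itv /= => /andP[ax _]; apply: dF; exact: lt_trans ax.
- by move=> x; rewrite in_itv /= => /andP[ax _]; apply: F'_gt0; exact: lt_trans ax.
- apply: derivable_within_continuous => x; rewrite in_itv /= => /andP[ax _].
  by apply: dF; exact: lt_le_trans ax.
Qed.

Section Theta.
Context {R : realType} (Phi : R -> R).
Hypothesis dPhi_incr :
  forall a b, 0 < a -> a < b -> derive1 Phi a < derive1 Phi b.

Lemma Theta_mul_gradE a b : 0 < a -> 0 < b ->
  Theta Phi a b * (derive1 Phi b - derive1 Phi a) = b - a.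
Proof.
move=> a0 b0; rewrite /Theta; have [->|ne] := eqVneq a b; first by rewrite !subrr mulr0.
have : derive1 Phi a - derive1 Phi b != 0.
  rewrite subr_eq0; have [ab|ba|ab] := ltgtP a b; last by rewrite ab eqxx in ne.
  - by rewrite lt_eqF ?dPhi_incr.
  - by rewrite gt_eqF ?dPhi_incr.
by move=> dab /=; field.
Qed.

Lemma Theta_gt0 a b : (forall x, 0 < x -> 0 < derive1 (derive1 Phi) x) ->
  0 < a -> 0 < b -> 0 < Theta Phi a b.
Proof.
move=> d2Phi_gt0 a0 b0; rewrite /Theta; have [->|ne] := eqVneq a b.
  by rewrite invr_gt0 d2Phi_gt0.
have [ab|ba|ab] := ltgtP a b; last by rewrite ab eqxx in ne.
- by rewrite -mulrNN -invrN !opprB divr_gt0 // subr_gt0 // dPhi_incr.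
- by rewrite divr_gt0 // subr_gt0 // dPhi_incr.
Qed.

End Theta.

Section MarkovChain.
Context {R : realType} {S : finType} (Pi : S -> S -> R) (q : S -> R).

Definition generator (f : S -> R) (x : S) : R := \sum_y kappa Pi x y * f y.

Definition qdot (f g : S -> R) : R := \sum_x q x * f x * g x.

Lemma qdotNr f g : qdot f (fun x => - g x) = - qdot f g.
Proof. by rewrite /qdot -sumrN; apply: eq_bigr => x _; ring. Qed.

Lemma qdot_linr f a b g h :
  qdot f (fun x => a * g x + b * h x) = a * qdot f g + b * qdot f h.
Proof. by rewrite /qdot 2!mulr_sumr -big_split; apply: eq_bigr => x _ /=; ring. Qed.

Lemma qdot_delta f y : qdot f (fun x => (x == y)%:R) = q y * f y.
Proof.
rewrite /qdot (bigD1 y) //= eqxx mulr1 big1 ?addr0 // => x /negbTE ->.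
by rewrite mulr0.
Qed.

Lemma qdot_eqP f f' : (forall x, q x != 0) ->
  (forall g, qdot f g = qdot f' g) <-> f =1 f'.
Proof.
move=> q_neq0; split=> [eq_f y | eq_f g]; last by apply: eq_bigr => x _; rewrite eq_f.
by have := eq_f (fun x => (x == y)%:R); rewrite !qdot_delta => /mulfI; apply.
Qed.

Hypothesis Pi_stoch : stochastic Pi.

Lemma sum_kappa_row x : \sum_y kappa Pi x y = 0.
Proof.
have [_ Pi1] := Pi_stoch; rewrite /kappa sumrB Pi1 (bigD1 x) //= eqxx.
by rewrite big1 ?addr0 ?subrr // => y; rewrite eq_sym => /negbTE ->.
Qed.

Lemma invariant_distribution_gt0 :
  irreducible Pi -> invariant_distribution Pi q -> forall x, 0 < q x.
Proof.
move=> irr [q_ge0 q1 q_inv] y; rewrite lt_neqAle q_ge0 andbT eq_sym.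
apply/negP => /eqP qy0.
have q_back a b : 0 < Pi a b -> q b = 0 -> q a = 0.
  move=> ab qb; have := q_inv b; rewrite qb.
  have qPi_ge0 x : true -> 0 <= q x * Pi x b by rewrite mulr_ge0 ?Pi_stoch.1.
  move=> /(psumr_eq0P qPi_ge0)/(_ a isT)/eqP.
  by rewrite mulf_eq0 (gt_eqF ab) orbF => /eqP.
have q0 x : q x = 0.
  have /connectP [p xp y_last] := irr x y.
  elim: p x xp y_last => [x _ /= <- //|z p IHp] x /= /andP[xz zp] y_last.
  exact: q_back xz (IHp _ zp y_last).
by move: q1; rewrite big1 // => /eqP; rewrite eq_sym oner_eq0.
Qed.

Hypothesis q_db : detailed_balance Pi q.

Lemma generator_adjoint (p : S -> R) y : (forall x, q x != 0) ->
  \sum_x kappa Pi x y * p x = q y * generator (fun x => p x / q x) y.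
Proof.
move=> q_neq0; rewrite /generator mulr_sumr; apply: eq_bigr => x _.
by rewrite mulrA q_db; field.
Qed.

Lemma dirichlet_sum_by_parts f g :
  \sum_x \sum_y cw Pi q x y * grad f x y * grad g x y = - qdot (generator f) g.
Proof.
pose T (h : S -> S -> R) := \sum_x \sum_y q x * kappa Pi x y * (f y - f x) * h x y.
have -> : \sum_x \sum_y cw Pi q x y * grad f x y * grad g x y =
          2^-1 * (T (fun _ y => g y) - T (fun x _ => g x)).
  rewrite /T -sumrB mulr_sumr; apply: eq_bigr => x _.
  by rewrite -sumrB mulr_sumr; apply: eq_bigr => y _; rewrite /cw /grad; ring.
have -> : T (fun _ y => g y) = - T (fun x _ => g x).
  rewrite /T exchange_big -sumrN; apply: eq_bigr => y _.
  by rewrite -sumrN; apply: eq_bigr => x _ /=; rewrite (q_db x y); ring.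
have -> : T (fun x _ => g x) = qdot (generator f) g.
  apply: eq_bigr => x _; rewrite /generator.
  transitivity (q x * g x * (\sum_y kappa Pi x y * f y - f x * \sum_y kappa Pi x y)).
    by rewrite [f x * _]mulr_sumr -sumrB mulr_sumr; apply: eq_bigr => y _; ring.
  by rewrite sum_kappa_row mulr0 subr0; ring.
by field.
Qed.

End MarkovChain.

Section H1Form.
Context {R : realType} {S : finType} (Pi : S -> S -> R) (q : S -> R)
  (Phi : R -> R) (l : S -> R).

Definition H1form (f g : S -> R) : R :=
  \sum_(xy : S * S | 0 < kappa Pi xy.1 xy.2)
     cw Pi q xy.1 xy.2 * vartheta Phi l xy.1 xy.2 * (grad f xy.1 xy.2 * grad g xy.1 xy.2).

Local Notation B := H1form.

Lemma H1sqE f : H1sq Pi q Phi l f = B f f.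
Proof. by apply: eq_bigr => xy _; rewrite expr2. Qed.

Lemma H1formC f g : B f g = B g f.
Proof. by apply: eq_bigr => xy _; rewrite (mulrC (grad f _ _)). Qed.

Lemma H1form_linl a b f g h :
  B (fun x => a * f x + b * g x) h = a * B f h + b * B g h.
Proof.
by rewrite /B 2!mulr_sumr -big_split; apply: eq_bigr => xy _; rewrite /grad /=; ring.
Qed.

Lemma H1form_linr a b f g h :
  B h (fun x => a * f x + b * g x) = a * B h f + b * B h g.
Proof. by rewrite H1formC H1form_linl (H1formC f) (H1formC g). Qed.

Lemma H1formNr f g : B f (fun x => - g x) = - B f g.
Proof. by rewrite /B -sumrN; apply: eq_bigr => xy _; rewrite /grad; ring. Qed.

Lemma H1formNN f : B (fun x => - f x) (fun x => - f x) = B f f.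
Proof. by rewrite H1formNr H1formC H1formNr opprK. Qed.

Hypothesis q_gt0 : forall x, 0 < q x.
Hypothesis vartheta_gt0 : forall x y, 0 < kappa Pi x y -> 0 < vartheta Phi l x y.

Lemma H1form_weight_gt0 x y :
  0 < kappa Pi x y -> 0 < cw Pi q x y * vartheta Phi l x y.
Proof. by move=> k_gt0; rewrite !mulr_gt0 ?invr_gt0 ?vartheta_gt0. Qed.

Lemma H1form_ge0 f : 0 <= B f f.
Proof.
apply: sumr_ge0 => xy k_gt0; rewrite -expr2.
by rewrite mulr_ge0 ?sqr_ge0 // ltW // H1form_weight_gt0.
Qed.

Lemma H1form_cauchy_schwarz f g : B f g ^+ 2 <= B f f * B g g.
Proof.
apply: quadratic_ge0_discriminant; first exact: H1form_ge0.
move=> t; have := H1form_ge0 (fun x => 1 * f x + t * g x).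
by rewrite H1form_linl !H1form_linr (H1formC g f); nra.
Qed.

Lemma H1form_le_sqrt f g : `|B f g| <= Num.sqrt (B f f) * Num.sqrt (B g g).
Proof.
rewrite -sqrtrM ?H1form_ge0 // -sqrtr_sqr.
by apply: ler_wsqrtr; exact: H1form_cauchy_schwarz.
Qed.

Lemma H1form_eq0_const f : stochastic Pi -> irreducible Pi ->
  B f f = 0 -> forall x y, f x = f y.
Proof.
move=> [Pi_ge0 _] irr Bff0.
have edge_ge0 (xy : S * S) : 0 < kappa Pi xy.1 xy.2 ->
    0 <= cw Pi q xy.1 xy.2 * vartheta Phi l xy.1 xy.2 * (grad f xy.1 xy.2 * grad f xy.1 xy.2).
  by move=> k_gt0; rewrite -expr2 mulr_ge0 ?sqr_ge0 // ltW // H1form_weight_gt0.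
have f_edge a b : 0 < Pi a b -> f a = f b.
  move=> ab; have [->//|ne] := eqVneq a b.
  have k_gt0 : 0 < kappa Pi a b by rewrite /kappa (negbTE ne) subr0.
  move: (psumr_eq0P edge_ge0 Bff0 (i := (a, b)) k_gt0) => /= /eqP.
  rewrite mulf_eq0 (gt_eqF (H1form_weight_gt0 _ _ k_gt0)) /= mulf_eq0 orbb.
  by rewrite /grad subr_eq0 => /eqP.
move=> x y; have /connectP [p xp ->] := irr x y.
by elim: p x xp => [|z p IHp] x //= /andP[xz zp]; rewrite (f_edge _ _ xz) IHp.
Qed.

Lemma H1form_generatorE (phi g : S -> R) : stochastic Pi -> detailed_balance Pi q ->
  (forall x y, 0 < kappa Pi x y -> vartheta Phi l x y * grad phi x y = grad l x y) ->
  B phi g = - qdot q (generator Pi l) g.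
Proof.
move=> Pi_stoch q_db grad_phi; rewrite -dirichlet_sum_by_parts // pair_big /=.
rewrite /B big_mkcond; apply: eq_bigr => -[x y] _ /=.
case: ifP => [k_gt0|k_le0]; first by rewrite -(grad_phi x y k_gt0); ring.
have [->|ne] := eqVneq x y; first by rewrite /grad subrr mulr0 mul0r.
rewrite /cw; suff -> : kappa Pi x y = 0 by rewrite mulr0 !mul0r.
by apply/eqP; rewrite eq_le leNgt k_le0 /kappa (negbTE ne) subr0 Pi_stoch.1.
Qed.

End H1Form.

Section Hm1Norm.
Context {R : realType} {S : finType} (Pi : S -> S -> R) (q : S -> R)
  (Phi : R -> R) (l d : S -> R).
Hypothesis q_gt0 : forall x, 0 < q x.
Hypothesis vartheta_gt0 : forall x y, 0 < kappa Pi x y -> 0 < vartheta Phi l x y.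
Hypothesis Pi_stoch : stochastic Pi.
Hypothesis Pi_irr : irreducible Pi.
Hypothesis d_mean0 : \sum_x q x * d x = 0.

Local Notation B := (H1form Pi q Phi l).
Local Notation N := (Hm1norm Pi q Phi l d).

Let B_ge0 f : 0 <= B f f := H1form_ge0 _ _ _ _ q_gt0 vartheta_gt0 f.

Lemma Hm1norm_ub g : ((qdot q d g / Num.sqrt (B g g))%:E <= N)%E.
Proof. by apply: ereal_sup_ubound; exists g => //; rewrite /H1norm H1sqE. Qed.

Lemma Hm1norm_ge0 : (0 <= N)%E.
Proof.
by have := Hm1norm_ub (fun _ => 0); rewrite /qdot big1 ?mul0r // => x _; rewrite mulr0.
Qed.

Lemma Hm1norm_le s : 0 <= s -> (forall g, qdot q d g <= s * Num.sqrt (B g g)) ->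
  (N <= s%:E)%E.
Proof.
move=> s_ge0 d_le; apply: ge_ereal_sup => _ [g _ <-]; rewrite /H1norm H1sqE lee_fin.
have [->|Bg_neq0] := eqVneq (Num.sqrt (B g g)) 0; first by rewrite invr0 mulr0.
by rewrite ler_pdivrMr ?d_le // lt_neqAle eq_sym Bg_neq0 sqrtr_ge0.
Qed.

Lemma qdot_H1form_eq0 g : B g g = 0 -> qdot q d g = 0.
Proof.
move=> /(H1form_eq0_const _ _ _ _ q_gt0 vartheta_gt0 _ Pi_stoch Pi_irr) g_const.
have [x0 _ | S0] := pickP (@predT S); last by rewrite /qdot big1 // => x; have := S0 x.
rewrite /qdot (eq_bigr (fun x => q x * d x * g x0)) => [|x _]; last by rewrite (g_const x x0).
by rewrite -mulr_suml d_mean0 mul0r.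
Qed.

Lemma Hm1norm_variational n g : N = n%:E -> 2 * qdot q d g - B g g <= n ^+ 2.
Proof.
move=> Nn; have [Bg0|Bg_neq0] := eqVneq (B g g) 0.
  by rewrite Bg0 qdot_H1form_eq0 // mulr0 subr0 sqr_ge0.
have sBg_gt0 : 0 < Num.sqrt (B g g) by rewrite sqrtr_gt0 lt_neqAle eq_sym Bg_neq0 B_ge0.
have := Hm1norm_ub g; rewrite Nn lee_fin ler_pdivrMr // => d_le.
rewrite -(sqr_sqrtr (B_ge0 g)); move: d_le; set s := Num.sqrt _ => d_le.
by have := sqr_ge0 (n - s); nra.
Qed.

Lemma Hm1norm_dual phi : (forall g, qdot q d g = - B phi g) ->
  N = (Num.sqrt (B phi phi))%:E.
Proof.
move=> d_dual; apply/le_anti/andP; split.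
  apply: Hm1norm_le => [|g]; first exact: sqrtr_ge0.
  rewrite d_dual; apply: le_trans (H1form_le_sqrt _ _ _ _ q_gt0 vartheta_gt0 phi g).
  by rewrite -normrN ler_norm.
apply: le_trans (Hm1norm_ub (fun x => - phi x)); rewrite lee_fin H1formNN.
rewrite d_dual H1formNr opprK.
have [->|sB_neq0] := eqVneq (Num.sqrt (B phi phi)) 0; first by rewrite invr0 mulr0.
by rewrite -{2}(sqr_sqrtr (B_ge0 phi)) expr2 mulfK.
Qed.

Lemma Hm1norm_energy_ge phi :
  ((- B phi phi)%:E <= (2 * qdot q d phi)%:E + N * N)%E.
Proof.
case Nc : N Hm1norm_ge0 => [n| |] // _; last by rewrite leey.
have := Hm1norm_variational n (fun x => - phi x) Nc.
rewrite H1formNN qdotNr -EFinM -EFinD lee_fin; lra.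
Qed.

Lemma Hm1norm_energy_eqP phi :
  ((2 * qdot q d phi)%:E + N * N = (- B phi phi)%:E)%E <->
  (forall g, qdot q d g = - B phi g).
Proof.
split=> [|d_dual]; last first.
  rewrite (Hm1norm_dual _ d_dual) -EFinM -EFinD d_dual -expr2 sqr_sqrtr ?B_ge0 //.
  by congr EFin; ring.
case Nc : N Hm1norm_ge0 => [n| |] // _.
rewrite -EFinM -EFinD => -[energy_eq] h.
(* By [energy_eq], - phi attains the bound of [Hm1norm_variational], so the
   first variation c of that concave functional at - phi along h vanishes. *)
set c := qdot q d h + B phi h.
have c2_le0 : c ^+ 2 <= 0.
  rewrite -(mul0r (B h h)); apply: quadratic_ge0_discriminant => [|t]; first exact: B_ge0.
  have := Hm1norm_variational n (fun x => -1 * phi x + - t * h x) Nc.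
  rewrite qdot_linr H1form_linl !H1form_linr (H1formC Pi q Phi l h phi) /c; nra.
by apply/eqP; rewrite -addr_eq0 -sqrf_eq0 -/c eq_le c2_le0 sqr_ge0.
Qed.

End Hm1Norm.

Section Curve.
Context {R : realType} {S : finType} (q : S -> R) (Pt : R -> S -> R).
Hypothesis Pt_smooth : forall x, smooth_nonneg (fun t => Pt t x).

Lemma has_rderiv0_likelihood x :
  has_rderiv0 (fun t => Pt t x / q x) (rderiv0 (fun t => Pt t x) / q x).
Proof.
apply: (has_rderiv0_eq _ (fun t => (q x)^-1 * Pt t x)) => [t _|]; first by rewrite mulrC.
by rewrite mulrC; apply/has_rderiv0_mull/smooth_nonneg_rderiv0.
Qed.

Lemma rderiv0_likelihood x :
  rderiv0 (fun t => Pt t x / q x) = rderiv0 (fun t => Pt t x) / q x.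
Proof. exact: rderiv0E (has_rderiv0_likelihood x). Qed.

Lemma sum_rderiv0_eq0 : (forall t, 0 <= t -> \sum_x Pt t x = 1) ->
  \sum_x rderiv0 (fun t => Pt t x) = 0.
Proof.
move=> Pt1; have Pt1_sum : has_rderiv0 (fun=> 1) (\sum_x rderiv0 (fun t => Pt t x)).
  apply: (has_rderiv0_eq _ _ _ (fun t t0 => esym (Pt1 t t0))).
  by apply: has_rderiv0_sum => x; exact: smooth_nonneg_rderiv0.
have cst1 : has_rderiv0 (fun=> 1 : R) 0.
  by rewrite /has_rderiv0; under eq_cvg do rewrite subrr mulr0; exact: cvg_cst.
by rewrite -(rderiv0E Pt1_sum) (rderiv0E cst1).
Qed.

Lemma rderiv0_Hphi Phi : (forall x, derivable Phi (Pt 0 x / q x) 1) ->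
  rderiv0 (fun t => Hphi Phi q (Pt t)) =
  qdot q (fun x => rderiv0 (fun t => Pt t x / q x)) (fun x => derive1 Phi (Pt 0 x / q x)).
Proof.
move=> dPhi; apply: rderiv0E; rewrite /Hphi /qdot.
have -> : \sum_x q x * rderiv0 (fun t => Pt t x / q x) * derive1 Phi (Pt 0 x / q x) =
          \sum_x q x * (derive1 Phi (Pt 0 x / q x) * (rderiv0 (fun t => Pt t x) / q x)).
  by apply: eq_bigr => x _; rewrite rderiv0_likelihood; ring.
apply: has_rderiv0_sum => x; apply: has_rderiv0_mull.
by apply: has_rderiv0_comp => //; exact: has_rderiv0_likelihood.
Qed.

Lemma likelihood_rderiv0_mean0 : (forall x, q x != 0) ->
  (forall t, 0 <= t -> \sum_x Pt t x = 1) ->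
  \sum_x q x * rderiv0 (fun t => Pt t x / q x) = 0.
Proof.
move=> q_neq0 Pt1; rewrite -[RHS](sum_rderiv0_eq0 Pt1).
by apply: eq_bigr => x _; rewrite rderiv0_likelihood mulrC divfK.
Qed.

End Curve.

Theorem theorem9p2 (R : realType) (S : finType) (Pi : S -> S -> R) (q : S -> R)
    (Phi : R -> R) (P : S -> R) (Pt : R -> S -> R) :
  stochastic Pi -> irreducible Pi -> invariant_distribution Pi q ->
  detailed_balance Pi q ->
  (* Phi : (0,oo) -> R convex *)
  (forall x y t, 0 < x -> 0 < y -> 0 <= t <= 1 ->
     Phi (t * x + (1 - t) * y) <= t * Phi x + (1 - t) * Phi y) ->
  (* continuously differentiable, with continuous strictly positive Phi'' *)
  (forall x, 0 < x -> derivable Phi x 1) ->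
  (forall x, 0 < x -> {for x, continuous (derive1 Phi)}) ->
  (forall x, 0 < x -> derivable (derive1 Phi) x 1) ->
  (forall x, 0 < x -> {for x, continuous (derive1 (derive1 Phi))}) ->
  (forall x, 0 < x -> 0 < derive1 (derive1 Phi) x) ->
  Phi 1 = 0 ->
  in_M P ->
  (* smooth curve (Pt t)_{t >= 0} in M with Pt 0 = P *)
  (forall t, 0 <= t -> in_M (Pt t)) ->
  Pt 0 = P ->
  (forall x, smooth_nonneg (fun t => Pt t x)) ->
  let l := fun x => P x / q x in
  let dl := fun x => rderiv0 (fun t => Pt t x / q x) in
  let lhs := ((2 * rderiv0 (fun t => Hphi Phi q (Pt t)))%:E
              + Hm1norm Pi q Phi l dl * Hm1norm Pi q Phi l dl)%E in
  let rhs := (- (H1sq Pi q Phi l (fun x => derive1 Phi (l x)))%:E)%E in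
  (rhs <= lhs)%E /\
  (lhs = rhs <->
   forall y, rderiv0 (fun t => Pt t y) = \sum_x kappa Pi x y * P x).
Proof.
move=> Pi_stoch Pi_irr q_inv q_db _ dPhi _ ddPhi _ d2Phi_gt0 _ _ PtM <- Pt_smooth.
move=> l dl lhs rhs; set phi := fun x => derive1 Phi (l x).
have q_gt0 := invariant_distribution_gt0 Pi q Pi_stoch Pi_irr q_inv.
have q_neq0 x : q x != 0 by rewrite gt_eqF.
have l_gt0 x : 0 < l x by rewrite divr_gt0 ?(PtM 0 (lexx 0)).1.
have dPhi_incr := derive1_gt0_incr _ ddPhi d2Phi_gt0.
have vartheta_gt0 x y : 0 < kappa Pi x y -> 0 < vartheta Phi l x y.
  by move=> _; apply: Theta_gt0.
have grad_phi x y : 0 < kappa Pi x y -> vartheta Phi l x y * grad phi x y = grad l x y.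
  by move=> _; apply: Theta_mul_gradE.
have dl_mean0 : \sum_x q x * dl x = 0.
  exact: likelihood_rderiv0_mean0 q_neq0 (fun t t0 => (PtM t t0).2).
have dl_gen y : dl y = generator Pi l y <->
    rderiv0 (fun t => Pt t y) = \sum_x kappa Pi x y * Pt 0 x.
  rewrite (generator_adjoint Pi q q_db _ y q_neq0) /dl rderiv0_likelihood //.
  by split=> [<-|->]; field.
have B_phiE g : - H1form Pi q Phi l phi g = qdot q (generator Pi l) g.
  by rewrite (H1form_generatorE _ _ _ _ _ _ Pi_stoch q_db grad_phi) opprK.
have -> : lhs = ((2 * qdot q dl phi)%:E + Hm1norm Pi q Phi l dl * Hm1norm Pi q Phi l dl)%E.
  by rewrite /lhs (rderiv0_Hphi q Pt Pt_smooth) // => x; apply: dPhi; exact: l_gt0.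
rewrite /rhs H1sqE; split; first exact: Hm1norm_energy_ge.
rewrite Hm1norm_energy_eqP //; split=> [dual y | p'E g].
  have /(qdot_eqP q _ _ q_neq0) dl_eq : forall g, qdot q dl g = qdot q (generator Pi l) g.
    by move=> g; rewrite dual B_phiE.
  exact/dl_gen/dl_eq.
by rewrite B_phiE; move: g; apply/(qdot_eqP q _ _ q_neq0) => y; apply/dl_gen.
Qed.
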